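(* Let $n$ and $k$ be integers with $1 \le k < n$, and let $0 \le r \le k-1$. Consider a set of $n$ items, of which $k$ are ''observed'' and carry a total order (partial ranking) $\beta_1 \succ \beta_2 \succ \cdots \succ \beta_k$, and the remaining $n-k$ items are ''unobserved''. Let $j = \beta_{r+1}$ be the observed item having exactly $r$ observed items ranked above it, and let $i$ be an unobserved item. Call a complete ranking (total order) of all $n$ items compatible with $\beta$ if its restriction to the observed items coincides with $\beta_1 \succ \cdots \succ \beta_k$. Then the proportion of complete rankings compatible with $\beta$ in which $i \succ j$ equals $$p(n,k,r) = \frac{1}{t(n,k)} \sum_{s=0}^{n-k-1} V^{s}_{n-k-1}\,(s+1)\, S^{r}_{s+1}\,(n-k-s-1)!\, S^{n-k-s-1}_{k-r-1},$$ where $t(n,k) = (n-k)!\, S^{k}_{n-k}$ is the total number of complete rankings compatible with $\beta$, $S^a_b = \frac{(a+b)!}{a!\,b!}$ is the number of shuffles of two lists of lengths $a$ and $b$ (interleavings preserving the relative order within each list), and $V^a_b = \frac{b!}{(b-a)!}$ is the number of ordered selections of $a$ objects out of $b$.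
   Context: A ranking $\pi_1 \succ \pi_2 \succ \cdots$ means $\pi_1$ is ranked best. A partial ranking is a total order on a subset of the items; a complete ranking compatible with it is a linear extension, i.e., a total order on all items that preserves the relative order of the partially ranked items. *)

From mathcomp Require Import all_boot all_order all_algebra all_fingroup.
Set Implicit Arguments. Unset Strict Implicit. Unset Printing Implicit Defensive.
Import GRing.Theory Num.Theory.
Local Open Scope ring_scope.

(* A complete ranking of the items 'I_n is a permutation sigma, where
   sigma x is the position of item x (position 0 = ranked best).
   So "x ≻ y" (x ranked above y) means sigma x < sigma y. *)

(* The partial ranking beta_1 ≻ ... ≻ beta_k is an injection beta : 'I_k -> 'I_n
   (beta a is the item at observed position a, 0-based). *)
Definition compatible (n k : nat) (beta : 'I_k -> 'I_n) (sigma : {perm 'I_n}) : bool :=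
  [forall a : 'I_k, forall b : 'I_k, (a < b)%N ==> (sigma (beta a) < sigma (beta b))%N].

Definition Sh (a b : nat) : rat := ((a + b)`!)%:R / ((a`!)%:R * (b`!)%:R).
Definition V (a b : nat) : rat := (b`!)%:R / (((b - a)%N)`!)%:R.

Definition t (n k : nat) : rat := ((n - k)%N`!)%:R * Sh k (n - k).

Definition p (n k r : nat) : rat :=
  (t n k)^-1 * \sum_(s < n - k)
     (V s (n - k - 1) * (s.+1)%:R * Sh r s.+1 * ((n - k - s - 1)%N`!)%:R
       * Sh (n - k - s - 1) (k - r - 1)).

From mathcomp Require Import all_boot all_order all_algebra all_fingroup.
From mathcomp Require Import zify ring.
Set Implicit Arguments. Unset Strict Implicit. Unset Printing Implicit Defensive.
Import GRing.Theory Num.Theory.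
Local Open Scope ring_scope.

(* The proportion is (r + 1) / (k + 1).  Among rankings compatible with beta,
   call the gap of i the number q of observed items ranked above i.  Exchanging
   the positions of i and beta_q is an involution sending the compatible rankings
   with gap q onto those with gap q + 1, so the k + 1 gaps are equally likely,
   and i beats beta_r exactly when its gap is at most r.  On the other side, the
   sum defining p n k r collapses, by the upper Vandermonde identity
   sum_s C(a + s, a) C(b + t - s, b) = C(a + b + t + 1, t), to the same value. *)

Lemma bin_addC a b : 'C(a + b, a) = 'C(a + b, b).
Proof. by rewrite -bin_sub ?leq_addr // addKn. Qed.

Lemma sum_bin_mul_bin a b t :
  (\sum_(s < t.+1) 'C(a + s, a) * 'C(b + (t - s), b) = 'C((a + b + t).+1, t))%N.
Proof.
elim: b t => [|b IHb] t.
  under eq_bigr do rewrite bin0 muln1.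
  elim: t => [|t IHt]; first by rewrite big_ord1 !addn0 !binn.
  by rewrite big_ord_recr /= IHt addn0 binS bin_addC -addnS addnC.
elim: t => [|t IHt]; first by rewrite big_ord1 !addn0 !binn.
have pascal (s : 'I_t.+1) : 'C(b.+1 + (t.+1 - s), b.+1)
    = ('C(b.+1 + (t - s), b.+1) + 'C(b + (t.+1 - s), b))%N.
  have s_le_t : (s <= t)%N by rewrite -ltnS.
  by rewrite subSn // addSn binS addnS.
rewrite big_ord_recr /= subnn addn0 binn muln1.
under eq_bigr do rewrite pascal mulnDr.
rewrite big_split /= IHt -addnA.
have := IHb t.+1; rewrite big_ord_recr /= subnn addn0 binn muln1 => ->.
by rewrite [RHS]binS addnC !addnS !addSn.
Qed.

Lemma Sh_bin a b : Sh a b = 'C(a + b, a)%:R.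
Proof.
rewrite /Sh -(bin_fact (leq_addr b a)) addKn !natrM mulfK //.
by rewrite mulf_neq0 // pnatr_eq0 -lt0n fact_gt0.
Qed.

Lemma V_mul_fact a b : V a b * ((b - a)`!)%:R = (b`!)%:R.
Proof. by rewrite /V mulfVK // pnatr_eq0 -lt0n fact_gt0. Qed.

Lemma p_closed_form n k r : (r < k < n)%N -> p n k r = r.+1%:R / k.+1%:R.
Proof.
case/andP=> r_lt_k k_lt_n.
have [b k_eq] : exists b, k = (r.+1 + b)%N by exists (k - r.+1)%N; lia.
have [m n_eq] : exists m, n = (k + m.+1)%N by exists (n - k.+1)%N; lia.
have bin_shift (s : nat) : (s.+1 * 'C(r + s.+1, r) = r.+1 * 'C(r.+1 + s, r.+1))%N.
  by rewrite mul_bin_left; congr (_ * 'C(_, _))%N; lia.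
have summand (s : 'I_m.+1) : V s m * s.+1%:R * Sh r s.+1 * ((m.+1 - s - 1)`!)%:R
    * Sh (m.+1 - s - 1) (k - r - 1) =
    (m`! * r.+1 * ('C(r.+1 + s, r.+1) * 'C(b + (m - s), b)))%:R.
  have s_le_m : (s <= m)%N by rewrite -ltnS.
  rewrite subn1 subSn //= (_ : k - r - 1 = b)%N; last by lia.
  rewrite [in RHS]mulnA -[in RHS](mulnA m`!) -bin_shift !Sh_bin.
  by rewrite (bin_addC (m - s)%N) (addnC (m - s)%N) !natrM -(V_mul_fact s m); ring.
rewrite /p /t n_eq addKn subn1 succnK (eq_bigr _ (fun s _ => summand s)) -natr_sum.
rewrite -big_distrr /= sum_bin_mul_bin Sh_bin -k_eq -addnS -n_eq.
have bin_rel : (k.+1 * 'C(n, m) = m.+1 * 'C(n, k))%N.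
  rewrite n_eq -addSnnS addnC bin_addC mul_bin_left.
  by congr (_ * 'C(_, _))%N; lia.
have nz_bin : ('C(n, k)%:R : rat) != 0 by rewrite pnatr_eq0 -lt0n bin_gt0 ltnW.
have nz_fact : ((m`!)%:R : rat) != 0 by rewrite pnatr_eq0 -lt0n fact_gt0.
have bin_rel_rat : 'C(n, m)%:R = m.+1%:R * 'C(n, k)%:R / k.+1%:R :> rat.
  by rewrite -natrM -bin_rel natrM; field; rewrite addrC natr1 pnatr_eq0.
rewrite factS !natrM bin_rel_rat; field.
by rewrite nz_bin nz_fact !(addrC 1) !natr1 !pnatr_eq0.
Qed.

Section Compatible.
Variables (n k : nat) (beta : 'I_k -> 'I_n).

Lemma compatibleP (s : {perm 'I_n}) :
  reflect (forall a b : 'I_k, (a < b)%N -> (s (beta a) < s (beta b))%N)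
          (compatible beta s).
Proof.
apply: (iffP forallP) => [compat a b | incr a].
  by have /forallP/(_ b)/implyP := compat a; apply.
by apply/forallP => b; apply/implyP; apply: incr.
Qed.

Lemma compatible_le (s : {perm 'I_n}) (a b : 'I_k) :
  compatible beta s -> (a <= b)%N -> (s (beta a) <= s (beta b))%N.
Proof.
move=> /compatibleP incr; rewrite leq_eqVlt => /orP[/eqP/val_inj-> // | /incr].
exact: ltnW.
Qed.

Lemma exists_compatible : injective beta -> exists s, compatible beta s.
Proof.
move=> beta_inj.
have k_le_n : (k <= n)%N by rewrite -[k]card_ord -[n]card_ord (leq_card _ beta_inj).
pose L := codom beta ++ enum [predC codom beta].
have L_perm : perm_eq L (ord_tuple n).
  apply: uniq_perm => [||x]; rewrite ?enum_uniq //.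
    have codom_uniq : uniq (codom beta) by apply/injectiveP.
    rewrite cat_uniq enum_uniq codom_uniq /= andbT.
    by apply/hasPn => x; rewrite mem_enum !inE.
  by rewrite mem_cat mem_enum inE orbN; symmetry; apply: mem_enum.
have [p L_eq] := tuple_permP L_perm.
have p_widen (a : 'I_k) : p (widen_ord k_le_n a) = beta a.
  have := congr1 (fun l => nth (beta a) l (widen_ord k_le_n a)) L_eq.
  rewrite -tnth_nth tnth_mktuple tnth_ord_tuple => <- /=.
  rewrite nth_cat size_codom card_ord ltn_ord.
  by rewrite codomE (nth_map a) ?size_enum_ord // nth_ord_enum.
exists p^-1%g; apply/compatibleP => a b.
by rewrite -!p_widen !permK.
Qed.

End Compatible.

Section Gaps.
Variables (n k : nat) (beta : 'I_k -> 'I_n) (i : 'I_n).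
Hypotheses (beta_inj : injective beta) (beta_neq_i : forall a, beta a != i).

Definition beats_from (q : nat) := [set s : {perm 'I_n} | compatible beta s &&
  [forall a : 'I_k, (q <= a)%N ==> (s i < s (beta a))%N]].

Definition in_gap (q : nat) := [set s : {perm 'I_n} | compatible beta s &&
  [forall a : 'I_k, (q <= a)%N == (s i < s (beta a))%N]].

(* [i] lies on one side or the other of [beta q], with no other observed item in
   between: the property preserved when [i] and [beta q] trade places. *)
Definition adjacent (q : 'I_k) (s : {perm 'I_n}) := compatible beta s &&
  [forall a : 'I_k, ((a < q)%N ==> (s (beta a) < s i)%N)
                    && ((q < a)%N ==> (s i < s (beta a))%N)].

Definition swap_with (q : 'I_k) (s : {perm 'I_n}) := (s * tperm (s i) (s (beta q)))%g.

Lemma neq_beta_i (s : {perm 'I_n}) (a : 'I_k) : (s (beta a) != s i :> nat).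
Proof. by rewrite val_eqE (inj_eq perm_inj). Qed.

Lemma swap_with_i (q : 'I_k) (s : {perm 'I_n}) : swap_with q s i = s (beta q).
Proof. by rewrite permM tpermL. Qed.

Lemma swap_with_beta (q a : 'I_k) (s : {perm 'I_n}) :
  swap_with q s (beta a) = if a == q then s i else s (beta a).
Proof.
rewrite permM; have [->|a_neq_q] := eqVneq a q; first exact: tpermR.
rewrite tpermD // eq_sym -?val_eqE ?neq_beta_i //.
by rewrite val_eqE (inj_eq perm_inj) (inj_eq beta_inj).
Qed.

Lemma swap_withK (q : 'I_k) : involutive (swap_with q).
Proof.
move=> s; rewrite {1}/swap_with swap_with_i swap_with_beta eqxx tpermC.
by rewrite -mulgA tperm2 mulg1.
Qed.

Lemma adjacent_swap (q : 'I_k) (s : {perm 'I_n}) :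
  adjacent q s -> adjacent q (swap_with q s).
Proof.
case/andP=> /compatibleP incr /forallP adj; apply/andP; split.
  apply/compatibleP => a b; rewrite !swap_with_beta.
  have := adj a; have := adj b; have := @incr a b.
  by case: eqVneq => [->|_]; case: eqVneq => [->|_]; lia.
apply/forallP => a; rewrite swap_with_i swap_with_beta.
case: eqVneq => [->|_]; first by rewrite ltnn.
by have := incr a q; have := incr q a; lia.
Qed.

Lemma in_gapE (q : 'I_k) (s : {perm 'I_n}) :
  (s \in in_gap q) = adjacent q s && (s i < s (beta q))%N.
Proof.
rewrite inE /adjacent -andbA; congr (_ && _).
apply/forallP/andP => [gap | [/forallP adj lt_q] a].
  split; last by have := gap q; lia.
  by apply/forallP => a; have := gap a; have := neq_beta_i s a; lia.
have [->|a_neq_q] := eqVneq a q; first by rewrite leqnn lt_q.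
have : (a : nat) != q by []; have := adj a; have := neq_beta_i s a; lia.
Qed.

Lemma in_gapSE (q : 'I_k) (s : {perm 'I_n}) :
  (s \in in_gap q.+1) = adjacent q s && (s (beta q) < s i)%N.
Proof.
rewrite inE /adjacent -andbA; congr (_ && _).
apply/forallP/andP => [gap | [/forallP adj lt_q] a].
  split; last by have := gap q; have := neq_beta_i s q; lia.
  by apply/forallP => a; have := gap a; have := neq_beta_i s a; lia.
have [->|a_neq_q] := eqVneq a q; first by move: lt_q; lia.
have : (a : nat) != q by []; have := adj a; have := neq_beta_i s a; lia.
Qed.

Lemma swap_with_in_gapS (q : 'I_k) (s : {perm 'I_n}) :
  (swap_with q s \in in_gap q.+1) = (s \in in_gap q).
Proof.
rewrite in_gapSE in_gapE swap_with_i swap_with_beta eqxx; congr (_ && _).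
apply/idP/idP; last exact: adjacent_swap.
by rewrite -{2}(swap_withK q s); apply: adjacent_swap.
Qed.

Lemma card_in_gapS (q : 'I_k) : #|in_gap q.+1| = #|in_gap q|.
Proof.
rewrite -(card_preimset _ (can_inj (swap_withK q))).
by apply: eq_card => s; rewrite inE swap_with_in_gapS.
Qed.

Lemma card_in_gap q : (q <= k)%N -> #|in_gap q| = #|in_gap 0|.
Proof.
elim: q => [// | q IHq] q_lt_k.
by rewrite (card_in_gapS (Ordinal q_lt_k)) IHq // ltnW.
Qed.

Lemma beats_from0 : beats_from 0 = in_gap 0.
Proof. by apply/setP => s; rewrite !inE. Qed.

Lemma beats_fromS (q : 'I_k) : beats_from q.+1 = beats_from q :|: in_gap q.+1.
Proof.
apply/setP => s; rewrite !inE; case: (boolP (compatible beta s)) => //= compat.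
have mono := compatible_le compat; have neq := neq_beta_i s.
apply/forallP/orP => [later | [/forallP earlier | /forallP gap] a].
- have [lt_q | ge_q] := ltnP (s i) (s (beta q)); [left | right]; apply/forallP => a.
    by have := later a; have := @mono q a; lia.
  by have := later a; have := @mono a q; have := neq a; have := neq q; lia.
- by have := earlier a; lia.
- by have := gap a; lia.
Qed.

Lemma card_beats_fromS (q : 'I_k) :
  #|beats_from q.+1| = (#|beats_from q| + #|in_gap q.+1|)%N.
Proof.
have disj : beats_from q :&: in_gap q.+1 = set0.
  apply/setP => s; rewrite !inE; apply/negbTE.
  apply/negP => /and3P[/andP[_ /forallP earlier] _ /forallP gap].
  by move: (earlier q) (gap q); rewrite leqnn ltnn /= => ->.
by rewrite beats_fromS -cardsUI disj cards0 addn0.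
Qed.

Lemma card_beats_from q : (q <= k)%N -> #|beats_from q| = (q.+1 * #|in_gap 0|)%N.
Proof.
elim: q => [_ | q IHq q_lt_k]; first by rewrite beats_from0 mul1n.
have step : #|beats_from q.+1| = (#|beats_from q| + #|in_gap q.+1|)%N :=
  card_beats_fromS (Ordinal q_lt_k).
by rewrite step IHq ?(ltnW q_lt_k) // card_in_gap // mulSn addnC.
Qed.

Lemma beats_from_all : beats_from k = [set s | compatible beta s].
Proof.
apply/setP => s; rewrite !inE andb_idr // => _.
by apply/forallP => a; rewrite leqNgt ltn_ord.
Qed.

Lemma beats_from_ord (r : 'I_k) :
  beats_from r = [set s | compatible beta s && (s i < s (beta r))%N].
Proof.
apply/setP => s; rewrite !inE; case: (boolP (compatible beta s)) => //= compat.
apply/forallP/idP => [/(_ r) | lt_r a]; first by rewrite leqnn.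
by apply/implyP => /(compatible_le compat); lia.
Qed.

End Gaps.

Theorem theorem1 (n k : nat) (r : 'I_k) (beta : 'I_k -> 'I_n) (i : 'I_n) :
  (1 <= k)%N -> (k < n)%N -> injective beta -> (forall a : 'I_k, beta a != i) ->
  (#|[set s : {perm 'I_n} | compatible beta s && (s i < s (beta r))%N]|%:R
     / #|[set s : {perm 'I_n} | compatible beta s]|%:R : rat)
  = p n k r.
Proof.
(* [1 <= k] is already forced by the existence of [r : 'I_k]. *)
move=> _ k_lt_n beta_inj beta_neq_i.
rewrite p_closed_form ?ltn_ord // -beats_from_ord -(beats_from_all beta i).
rewrite !card_beats_from ?(ltnW (ltn_ord r)) //.
have gap0_pos : (0 < #|in_gap beta i 0|)%N.
  have [s compat] := exists_compatible beta_inj.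
  have : (0 < #|beats_from beta i k|)%N.
    by apply/card_gt0P; exists s; rewrite beats_from_all inE.
  by rewrite card_beats_from // muln_gt0.
by rewrite !natrM -mulf_div divff ?mulr1 // pnatr_eq0 -lt0n.
Qed.
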